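(* Under the setting of the context (with $\boldsymbol{Z}_a=[\boldsymbol{Z}_r\ \boldsymbol{Z}_u]$ of full column rank and arbitrary $\boldsymbol{w}_{\mathrm{init}}\in\mathbb{R}^D$, $\boldsymbol{y}_r\in\mathbb{R}^{N_r}$, $\boldsymbol{y}_u\in\mathbb{R}^{N_u}$), if the forgetting labels are set to $$\tilde{\boldsymbol{y}}_u=\boldsymbol{Z}_u^\top\big(\boldsymbol{\Pi}_r(\boldsymbol{w}_p-\boldsymbol{w}_{\mathrm{init}})+\boldsymbol{w}_{\mathrm{init}}\big),$$ then $\boldsymbol{w}_u=\boldsymbol{w}_r$.
   Context: Setting (over-parameterized linear model trained to interpolation / minimum-distance solutions). Given $\boldsymbol{Z}_r\in\mathbb{R}^{D\times N_r}$ (features of remaining data), $\boldsymbol{Z}_u\in\mathbb{R}^{D\times N_u}$ (features of forgetting data), with $\boldsymbol{Z}_a=[\boldsymbol{Z}_r\ \boldsymbol{Z}_u]$ of full column rank. Write $\boldsymbol{y}_a=[\boldsymbol{y}_r;\boldsymbol{y}_u]\in\mathbb{R}^{N_r+N_u}$ (original labels) and $\tilde{\boldsymbol{y}}_a=[\boldsymbol{y}_r;\tilde{\boldsymbol{y}}_u]$ (labels with the forgetting part replaced by $\tilde{\boldsymbol{y}}_u$). Define $\boldsymbol{w}_p=\boldsymbol{w}_{\mathrm{init}}+\boldsymbol{Z}_a(\boldsymbol{Z}_a^\top\boldsymbol{Z}_a)^{-1}(\boldsymbol{y}_a-\boldsymbol{Z}_a^\top\boldsymbol{w}_{\mathrm{init}})$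 (pre-trained model), $\boldsymbol{w}_u=\boldsymbol{w}_p+\boldsymbol{Z}_a(\boldsymbol{Z}_a^\top\boldsymbol{Z}_a)^{-1}(\tilde{\boldsymbol{y}}_a-\boldsymbol{Z}_a^\top\boldsymbol{w}_p)$ (unlearned model), $\boldsymbol{w}_r=\boldsymbol{w}_{\mathrm{init}}+\boldsymbol{Z}_r(\boldsymbol{Z}_r^\top\boldsymbol{Z}_r)^{-1}(\boldsymbol{y}_r-\boldsymbol{Z}_r^\top\boldsymbol{w}_{\mathrm{init}})$ (retrained model). Let $\boldsymbol{\Pi}_r=\boldsymbol{Z}_r(\boldsymbol{Z}_r^\top\boldsymbol{Z}_r)^{-1}\boldsymbol{Z}_r^\top$. *)

From HB Require Import structures.
From mathcomp Require Import all_boot all_order all_algebra.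
Set Implicit Arguments. Unset Strict Implicit. Unset Printing Implicit Defensive.
Import Order.TTheory GRing.Theory Num.Theory.
Local Open Scope ring_scope.

Definition min_dist_update (R : realFieldType) (D N : nat)
  (Z : 'M[R]_(D, N)) (w0 : 'cV[R]_D) (y : 'cV[R]_N) : 'cV[R]_D :=
  w0 + Z *m invmx (Z^T *m Z) *m (y - Z^T *m w0).

Definition Za (R : realFieldType) (D Nr Nu : nat)
  (Zr : 'M[R]_(D, Nr)) (Zu : 'M[R]_(D, Nu)) : 'M[R]_(D, Nr + Nu) :=
  row_mx Zr Zu.

Definition w_p (R : realFieldType) (D Nr Nu : nat)
  (Zr : 'M[R]_(D, Nr)) (Zu : 'M[R]_(D, Nu)) (winit : 'cV[R]_D)
  (yr : 'cV[R]_Nr) (yu : 'cV[R]_Nu) : 'cV[R]_D :=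
  min_dist_update (Za Zr Zu) winit (col_mx yr yu).

Definition w_u (R : realFieldType) (D Nr Nu : nat)
  (Zr : 'M[R]_(D, Nr)) (Zu : 'M[R]_(D, Nu)) (winit : 'cV[R]_D)
  (yr : 'cV[R]_Nr) (yu yu' : 'cV[R]_Nu) : 'cV[R]_D :=
  min_dist_update (Za Zr Zu) (w_p Zr Zu winit yr yu) (col_mx yr yu').

Definition w_r (R : realFieldType) (D Nr : nat)
  (Zr : 'M[R]_(D, Nr)) (winit : 'cV[R]_D) (yr : 'cV[R]_Nr) : 'cV[R]_D :=
  min_dist_update Zr winit yr.

Definition Pi_r (R : realFieldType) (D Nr : nat) (Zr : 'M[R]_(D, Nr))
  : 'M[R]_D :=
  Zr *m invmx (Zr^T *m Zr) *m Zr^T.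

From HB Require Import structures.
From mathcomp Require Import all_boot all_order all_algebra.
Import Order.TTheory GRing.Theory Num.Theory.
Local Open Scope ring_scope.

(* When Z^T Z is invertible, the minimum-distance update from w0 interpolates
   its labels, and it fixes every w in w0 + span Z that already interpolates
   them.  The pre-trained model fits y_r, so the retrained model is
   w_init + Pi_r (w_p - w_init); by the choice of the forgetting labels it
   fits the modified labels, and it differs from w_p by an element of
   span Z_a.  Hence the update from w_p returns exactly the retrained model. *)

Lemma trmx_mul_self_eq0 {R : realFieldType} {n} (u : 'cV[R]_n) :
  (u^T *m u == 0) = (u == 0).
Proof.
apply/idP/eqP => [|->]; last by rewrite mulmx0.
move/eqP/matrixP/(_ 0 0); rewrite !mxE => /eqP.
under eq_bigr do rewrite mxE -expr2.
rewrite psumr_eq0 => [/allP sq0|i _]; last exact: sqr_ge0.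
apply/matrixP => i j; rewrite (ord1 j) mxE.
by have /implyP := sq0 i (mem_index_enum i); rewrite sqrf_eq0 => /(_ isT)/eqP.
Qed.

Lemma gram_unitmx {R : realFieldType} {m n} {Z : 'M[R]_(m, n)} :
  row_free Z^T -> Z^T *m Z \in unitmx.
Proof.
move=> freeZt; rewrite -row_free_unit; apply: inj_row_free => v vG0.
have /eqP : (Z *m v^T)^T *m (Z *m v^T) = 0.
  by rewrite trmx_mul trmxK mulmxA -(mulmxA v) vG0 mul0mx.
rewrite trmx_mul_self_eq0 -trmx_eq0 trmx_mul trmxK.
by rewrite (mulmx_free_eq0 _ freeZt) => /eqP.
Qed.

Lemma row_free_col_mxl {R : fieldType} {m1 m2 n}
    (A : 'M[R]_(m1, n)) (B : 'M[R]_(m2, n)) :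
  row_free (col_mx A B) -> row_free A.
Proof.
move=> freeAB; apply: inj_row_free => v vA0.
have /eqP : row_mx v 0 *m col_mx A B = 0 by rewrite mul_row_col vA0 mul0mx addr0.
by rewrite (mulmx_free_eq0 _ freeAB) row_mx_eq0 => /andP[/eqP].
Qed.

Lemma min_dist_update_proj {R : realFieldType} {D N}
    (Z : 'M[R]_(D, N)) (w0 w : 'cV[R]_D) :
  min_dist_update Z w0 (Z^T *m w) =
  w0 + Z *m invmx (Z^T *m Z) *m Z^T *m (w - w0).
Proof. by rewrite /min_dist_update -mulmxBr !mulmxA. Qed.

Section MinDistUpdate.
Variables (R : realFieldType) (D N : nat) (Z : 'M[R]_(D, N)).
Hypothesis gramZ : Z^T *m Z \in unitmx.

Lemma min_dist_update_interpolates (w0 : 'cV[R]_D) (y : 'cV[R]_N) :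
  Z^T *m min_dist_update Z w0 y = y.
Proof.
by rewrite /min_dist_update mulmxDr !mulmxA mulmxV // mul1mx addrC subrK.
Qed.

Lemma min_dist_update_span (w0 : 'cV[R]_D) (c : 'cV[R]_N) :
  min_dist_update Z w0 (Z^T *m (w0 + Z *m c)) = w0 + Z *m c.
Proof.
rewrite min_dist_update_proj [w0 + Z *m c - w0]addrC addKr.
by rewrite -!mulmxA (mulmxA Z^T) (mulmxA (invmx _)) mulVmx ?mul1mx.
Qed.

End MinDistUpdate.

Theorem corollary1 (R : realFieldType) (D Nr Nu : nat)
  (Zr : 'M[R]_(D, Nr)) (Zu : 'M[R]_(D, Nu))
  (winit : 'cV[R]_D) (yr : 'cV[R]_Nr) (yu : 'cV[R]_Nu) :
  \rank (Za Zr Zu) = (Nr + Nu)%N ->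
  let wp := w_p Zr Zu winit yr yu in
  let yu' := Zu^T *m (Pi_r Zr *m (wp - winit) + winit) in
  w_u Zr Zu winit yr yu yu' = w_r Zr winit yr.
Proof.
move=> rankA wp yu'; set A := Za Zr Zu.
have freeAt : row_free A^T by rewrite /row_free mxrank_tr rankA.
have freeZrt : row_free Zr^T.
  by move: freeAt; rewrite tr_row_mx; apply: row_free_col_mxl.
have gramA := gram_unitmx freeAt; have gramZr := gram_unitmx freeZrt.
have fitA : A^T *m wp = col_mx yr yu by apply: min_dist_update_interpolates.
have fitZr : Zr^T *m wp = yr.
  by move: fitA; rewrite tr_row_mx mul_col_mx => /eq_col_mx[].
set e := invmx (Zr^T *m Zr) *m Zr^T *m (wp - winit).
have wrE : w_r Zr winit yr = winit + A *m col_mx e 0.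
  by rewrite /w_r -fitZr min_dist_update_proj mul_row_col mulmx0 addr0 !mulmxA.
set d := invmx (A^T *m A) *m (col_mx yr yu - A^T *m winit).
have wpE : wp = winit + A *m d by rewrite /wp /w_p /min_dist_update mulmxA.
have yu'E : yu' = Zu^T *m w_r Zr winit yr.
  by rewrite wrE mul_row_col mulmx0 addr0 /yu' addrC /Pi_r !mulmxA.
have fit_wr : col_mx yr yu' = A^T *m w_r Zr winit yr.
  by rewrite yu'E tr_row_mx mul_col_mx min_dist_update_interpolates.
have wr_wpE : w_r Zr winit yr = wp + A *m (col_mx e 0 - d).
  by rewrite wrE wpE mulmxBr [_ - A *m d]addrC addrA addrK.
rewrite /w_u -/A -/wp fit_wr wr_wpE.
exact: min_dist_update_span.
Qed.
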